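(* There exist (connected) bipartite graphs $G$ and integers $k$ with $k-1\ge\chi(G)$ for which $\mathrm{sn}(G,k)<\mathrm{sn}(G,k-1)$; that is, $\mathrm{sn}(G,k)$ is not in general monotone non-decreasing in $k$.
   Context: All graphs are finite and simple. For a graph $G=(V,E)$ and an integer $k\ge\chi(G)$, a proper $k$-colouring is a map $c:V\to[k]$ with $c(u)\neq c(v)$ for every edge $uv$. $\mathrm{sn}(G,k)$ is the minimum number of vertices of $G$ that have to be coloured in a partial colouring such that there exists a unique proper $k$-colouring of $G$ extending it. *)

From mathcomp Require Import all_boot.
Set Implicit Arguments. Unset Strict Implicit. Unset Printing Implicit Defensive.

Definition simple_graph (T : finType) (e : rel T) : Prop :=
  symmetric e /\ irreflexive e.

Definition proper_col (T : finType) (e : rel T) (k : nat) (c : {ffun T -> 'I_k}) : bool :=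
  [forall u, forall v, e u v ==> (c u != c v)].

Definition colourable (T : finType) (e : rel T) (k : nat) : bool :=
  [exists c : {ffun T -> 'I_k}, proper_col e c].

(* chromatic number: least k admitting a proper k-colouring
   (k = #|T| always works, so the bound #|T| is never a default value) *)
Definition chi (T : finType) (e : rel T) : nat :=
  \big[minn/#|T|]_(k < #|T|.+1 | colourable e k) (k : nat).

Definition bipartite (T : finType) (e : rel T) : Prop :=
  exists f : T -> bool, forall u v, e u v -> f u != f v.

Definition connected_graph (T : finType) (e : rel T) : Prop :=
  forall u v : T, connect e u v.

Definition extends (T : finType) (k : nat) (S : {set T}) (p c : {ffun T -> 'I_k}) : bool :=
  [forall x in S, c x == p x].

Definition uniquely_extends (T : finType) (e : rel T) (k : nat)
    (S : {set T}) (p : {ffun T -> 'I_k}) : bool :=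
  #|[set c : {ffun T -> 'I_k} | proper_col e c && extends S p c]| == 1.

Definition defining_set (T : finType) (e : rel T) (k : nat) (S : {set T}) : bool :=
  [exists p : {ffun T -> 'I_k}, uniquely_extends e S p].

(* sn(G,k): minimum size of a defining set (for k >= chi(G) the full vertex
   set is a defining set, so the default #|T| is never used there) *)
Definition sn (T : finType) (e : rel T) (k : nat) : nat :=
  \big[minn/#|T|]_(S : {set T} | defining_set e k S) #|S|.

From mathcomp Require Import all_boot order.
Set Implicit Arguments. Unset Strict Implicit. Unset Printing Implicit Defensive.
Import Order.TTheory.

(* The example is the crown graph K_{4,4} minus a perfect matching with every
   vertex replaced by three pairwise non-adjacent twins.  Colouring each vertex
   by its index in the crown is a 4-colouring forced by one copy of each of the
   4 vertices on one side, so sn(G,4) <= 4.  A vertex that can be recoloured on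
   its own (some other colour is missing from its neighbourhood) must belong to
   every defining set, and every proper 3-colouring has at least 6 such vertices:
   if two vertices on opposite sides share a colour they are twins in the crown,
   and their whole column sees a single colour; otherwise the two sides use
   disjoint colour sets, one side is monochromatic, and every vertex of the other
   side sees only that colour.  Hence sn(G,3) > 4. *)

Lemma exists_notin (T : finType) (s : seq T) : size s < #|T| -> exists x, x \notin s.
Proof.
move=> lt_s_T; case: (pickP [predC s]) => [x sx | all_in]; first by exists x.
suff : #|T| <= size s by rewrite leqNgt lt_s_T.
apply: leq_trans (card_size s); apply/subset_leq_card/subsetP => x _.
by have /negbFE := all_in x.
Qed.

Lemma uniq_size_le_card (T : finType) (s : seq T) : uniq s -> size s <= #|T|.
Proof. by move/card_uniqP <-; exact: max_card. Qed.

Section Colourings.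

Variables (T : finType) (e : rel T).

Lemma proper_colP k (c : {ffun T -> 'I_k}) :
  reflect (forall u v, e u v -> c u != c v) (proper_col e c).
Proof.
apply: (iffP forallP) => [c_proper u v | c_proper u].
  by move: (c_proper u) => /forallP /(_ v) /implyP.
by apply/forallP => v; apply/implyP; apply: c_proper.
Qed.

Lemma extendsP k (S : {set T}) (p c : {ffun T -> 'I_k}) :
  reflect {in S, c =1 p} (extends S p c).
Proof.
apply: (iffP forallP) => [c_ext x xS | c_ext x].
  by move: (c_ext x) => /implyP /(_ xS) /eqP.
by apply/implyP => xS; rewrite c_ext.
Qed.

Lemma chi_le k : k <= #|T| -> colourable e k -> chi e <= k.
Proof.
rewrite -ltnS => lt_k_T col_k.
exact: (@bigmin_le_cond _ nat _ #|T| (Ordinal lt_k_T) _ _ col_k).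
Qed.

Lemma sn_le_card k (S : {set T}) : defining_set e k S -> sn e k <= #|S|.
Proof. exact: (@bigmin_le_cond _ nat _ #|T| S). Qed.

Lemma sn_ge k m :
  m <= #|T| -> (forall S : {set T}, defining_set e k S -> m <= #|S|) -> m <= sn e k.
Proof. exact: (@le_bigmin _ nat _ (index_enum _) _ #|T| m). Qed.

Lemma colour_forced k (c : {ffun T -> 'I_k}) v i :
  proper_col e c -> (forall j, j != i -> exists2 u, e v u & c u = j) -> c v = i.
Proof.
move=> /proper_colP c_proper seen; apply/eqP; apply: contraT => cv_i.
by have [u vu cu] := seen _ cv_i; move: (c_proper v u vu); rewrite cu eqxx.
Qed.

Definition recolourable k (c : {ffun T -> 'I_k}) v : bool :=
  [exists x, (x != c v) && [forall u, e v u ==> (c u != x)]].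

Definition recolour k (c : {ffun T -> 'I_k}) v x : {ffun T -> 'I_k} :=
  [ffun u => if u == v then x else c u].

Lemma recolourable_nbhd_monochrome k (c : {ffun T -> 'I_k}) v :
  2 < k -> (forall u w, e v u -> e v w -> c u = c w) -> recolourable c v.
Proof.
move=> k_gt2 mono.
have [y nbhd_y] : exists y, forall u, e v u -> c u = y.
  case: (pickP (e v)) => [u0 vu0 | no_nbr].
    by exists (c u0) => u vu; apply: mono.
  by exists (c v) => u; rewrite no_nbr.
have [x] : exists x, x \notin [:: c v; y] by apply: exists_notin; rewrite card_ord.
rewrite !inE negb_or => /andP [xv xy]; apply/existsP; exists x; rewrite xv.
by apply/forallP => u; apply/implyP => /nbhd_y ->; rewrite eq_sym.
Qed.

Hypothesis e_sym : symmetric e.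

Lemma proper_recolour k (c : {ffun T -> 'I_k}) v x :
  proper_col e c -> (forall u, e v u -> c u != x) -> proper_col e (recolour c v x).
Proof.
move=> /proper_colP c_proper x_free; apply/proper_colP => u w uw; rewrite !ffunE.
case: (eqVneq u v) => [u_v | u_v]; case: (eqVneq w v) => [w_v | w_v].
- by move: (c_proper _ _ uw); rewrite u_v w_v eqxx.
- by rewrite eq_sym x_free // -u_v.
- by rewrite x_free // e_sym -w_v.
- exact: c_proper.
Qed.

Lemma defining_set_recolourable k (S : {set T}) (p c : {ffun T -> 'I_k}) v :
  uniquely_extends e S p -> proper_col e c -> extends S p c -> recolourable c v ->
  v \in S.
Proof.
move=> /cards1P [c1 ext_c1] c_proper c_ext /existsP [x /andP [x_cv /forallP x_free]].
apply: contraT => vS.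
have unique d : proper_col e d -> extends S p d -> d = c1.
  by move=> d_proper d_ext; apply/set1P; rewrite -ext_c1 inE d_proper d_ext.
have recol_c1 : recolour c v x = c1.
  apply: unique; first by apply: proper_recolour => // u; apply/implyP.
  apply/extendsP => y yS; rewrite ffunE; case: eqP => [y_v | _].
    by rewrite -y_v yS in vS.
  by move/extendsP: c_ext; apply.
by move: x_cv; rewrite (unique _ c_proper c_ext) -recol_c1 ffunE !eqxx.
Qed.

Lemma sn_ge_recolourable k m :
  m <= #|T| ->
  (forall c : {ffun T -> 'I_k}, proper_col e c -> m <= #|[set v | recolourable c v]|) ->
  m <= sn e k.
Proof.
move=> m_T many; apply: sn_ge => // S /existsP [p uniq_p].
move: (uniq_p) => /cards1P [c ext_c].
have : c \in [set c | proper_col e c && extends S p c] by rewrite ext_c set11.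
rewrite inE => /andP [c_proper c_ext].
apply: leq_trans (many c c_proper) _; apply/subset_leq_card/subsetP => v.
by rewrite inE; apply: defining_set_recolourable uniq_p c_proper c_ext.
Qed.

End Colourings.

Lemma no_four_colours (a b x y : 'I_3) : ~~ uniq [:: a; b; x; y].
Proof. by apply/negP => /uniq_size_le_card; rewrite card_ord. Qed.

Notation vertex := (bool * 'I_4 * 'I_3)%type.

(* [(s, i, a)] is copy [a] of vertex [i] on side [s] of the crown graph, i.e.
   of K_{4,4} minus the perfect matching pairing [(false, i)] with [(true, i)]. *)
Definition crown : rel vertex := fun u v => (u.1.1 != v.1.1) && (u.1.2 != v.1.2).

Lemma crown_sym : symmetric crown.
Proof. by move=> u v; rewrite /crown eq_sym [u.1.2 == _]eq_sym. Qed.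

Lemma crown_simple : simple_graph crown.
Proof. by split; [exact: crown_sym | move=> v; rewrite /crown eqxx]. Qed.

Lemma crown_bipartite : bipartite crown.
Proof. by exists (fun v : vertex => v.1.1) => u v /andP []. Qed.

Lemma crown_connect_hub v : connect crown v (false, ord0, ord0).
Proof.
have false_hub i a : connect crown (false, i, a) (false, ord0, ord0).
  have [j] : exists j : 'I_4, j \notin [:: ord0; i].
    by apply: exists_notin; rewrite card_ord.
  rewrite !inE negb_or => /andP [j0 ji].
  apply: (@connect_trans _ _ (true, j, ord0)); apply: connect1.
    by rewrite /crown /= eq_sym.
  by rewrite /crown /=.
case: v => [[[|] i] a]; last exact: false_hub.
have [j] : exists j : 'I_4, j \notin [:: i] by apply: exists_notin; rewrite card_ord.
rewrite inE => ji; apply: (@connect_trans _ _ (false, j, ord0)); last exact: false_hub.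
by apply: connect1; rewrite /crown /= eq_sym.
Qed.

Lemma crown_connected : connected_graph crown.
Proof.
move=> u v; apply: connect_trans (crown_connect_hub u) _.
by rewrite (sym_connect_sym crown_sym); exact: crown_connect_hub.
Qed.

Lemma chi_crown : chi crown <= 2.
Proof.
apply: chi_le; first by rewrite !card_prod card_bool !card_ord.
apply/existsP; exists [ffun v : vertex => if v.1.1 then ord0 else ord_max].
apply/proper_colP => u v /andP [uv _]; rewrite !ffunE.
by move: uv; case: u.1.1; case: v.1.1.
Qed.

Definition index_colouring : {ffun vertex -> 'I_4} := [ffun v => v.1.2].

Definition index_seed : {set vertex} := [set (false, i, ord0) | i : 'I_4].

Lemma index_colouring_proper : proper_col crown index_colouring.
Proof. by apply/proper_colP => u v /andP [_ uv]; rewrite !ffunE. Qed.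

Lemma index_seed_forces : uniquely_extends crown index_seed index_colouring.
Proof.
apply/cards1P; exists index_colouring; apply/setP => c; rewrite !inE.
apply/andP/eqP => [[c_proper /extendsP c_ext] | ->]; last first.
  by split; [exact: index_colouring_proper | exact/extendsP].
have true_forced j b : c (true, j, b) = j.
  apply: colour_forced c_proper _ => i ij; exists (false, i, ord0).
    by rewrite /crown /= eq_sym.
  by rewrite c_ext ?ffunE //; apply/imsetP; exists i.
apply/ffunP => [[[s i] a]]; rewrite ffunE /=; case: s; first exact: true_forced.
apply: colour_forced c_proper _ => j ji; exists (true, j, ord0) => //.
by rewrite /crown /= eq_sym.
Qed.

Lemma sn_crown4 : sn crown 4 <= 4.
Proof.
apply: leq_trans (sn_le_card _) _.
  by apply/existsP; exists index_colouring; exact: index_seed_forces.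
by apply: leq_trans (leq_imset_card _ _) _; rewrite card_ord.
Qed.

Definition side s : {set vertex} := [set (s, p.1, p.2) | p : 'I_4 * 'I_3].

Definition column i : {set vertex} := [set (p.1, i, p.2) | p : bool * 'I_3].

Lemma card_side s : #|side s| = 12.
Proof.
rewrite card_imset; first by rewrite card_prod !card_ord.
by move=> [i a] [j b] /= [-> ->].
Qed.

Lemma card_column i : #|column i| = 6.
Proof.
rewrite card_imset; first by rewrite card_prod card_bool card_ord.
by move=> [s a] [t b] /= [-> ->].
Qed.

Section CrownThreeColourings.

Variable c : {ffun vertex -> 'I_3}.
Hypothesis c_proper : proper_col crown c.

Let c_ok : forall u v, crown u v -> c u != c v := elimT (proper_colP _ _) c_proper.

Let free := [set v | recolourable crown c v].

Lemma cross_colour_index u w : u.1.1 != w.1.1 -> c u = c w -> u.1.2 = w.1.2.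
Proof.
move=> uw cuw; apply/eqP; apply: contraT => iuw.
by have := c_ok (_ : crown u w); rewrite cuw eqxx; apply; rewrite /crown uw.
Qed.

Lemma recolourable_column u w v :
  u.1.1 != w.1.1 -> c u = c w -> v.1.2 = u.1.2 -> recolourable crown c v.
Proof.
wlog v_u : u w / v.1.1 = u.1.1.
  move=> main uw cuw vu; case: (eqVneq v.1.1 u.1.1) => [v_u | v_u].
    exact: main v_u uw cuw vu.
  apply: (main w u); rewrite 1?eq_sym //.
    by move: uw v_u; case: (v.1.1); case: (u.1.1); case: (w.1.1).
  by rewrite vu (cross_colour_index uw cuw).
move=> uw cuw vu.
have nbr_u x : crown v x = crown u x by rewrite /crown v_u vu.
apply: recolourable_nbhd_monochrome => // x1 x2; rewrite !nbr_u => ux1 ux2.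
apply/eqP; apply: contraT => x12.
have [q] : exists q : 'I_4, q \notin [:: u.1.2; x1.1.2; x2.1.2].
  by apply: exists_notin; rewrite card_ord.
rewrite !inE !negb_or => /and3P [qu qx1 qx2].
(* The vertex [y] below would see the three distinct colours of [w], [x1], [x2]. *)
set y : vertex := (u.1.1, q, ord0).
have yw : crown y w by rewrite /crown /= uw -(cross_colour_index uw cuw).
have yx1 : crown y x1 by case/andP: ux1 => ? _; rewrite /crown /= qx1 andbT.
have yx2 : crown y x2 by case/andP: ux2 => ? _; rewrite /crown /= qx2 andbT.
have := no_four_colours (c y) (c w) (c x1) (c x2).
rewrite /= !inE !negb_or (c_ok yw) (c_ok yx1) (c_ok yx2) x12.
by rewrite -cuw (c_ok ux1) (c_ok ux2).
Qed.

Lemma recolourable_opposite_side s z :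
  (forall v, v.1.1 = s -> c v = z) -> side (~~ s) \subset free.
Proof.
move=> mono; apply/subsetP => _ /imsetP [[i a] _ ->]; rewrite inE.
apply: recolourable_nbhd_monochrome => // x y /andP [sx _] /andP [sy _].
have side_s (b : bool) : ~~ s != b -> b = s by case: b; case: (s).
by rewrite (mono x (side_s _ sx)) (mono y (side_s _ sy)).
Qed.

Lemma monochromatic_side :
  (forall u w, u.1.1 != w.1.1 -> c u != c w) ->
  exists s z, forall v, v.1.1 = s -> c v = z.
Proof.
move=> disjoint.
set r0 : vertex := (true, ord0, ord0); set l0 : vertex := (false, ord0, ord0).
case: (pickP [pred r : vertex | r.1.1 && (c r != c r0)]) => [r1 | true_mono]; last first.
  exists true, (c r0) => v v_true.
  by move: (true_mono v); rewrite /= v_true /= => /negbFE /eqP.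
rewrite /= => /andP [r1_true r1_r0]; exists false, (c l0) => l l_false.
apply/eqP; apply: contraT => l_l0.
have := no_four_colours (c r0) (c r1) (c l) (c l0).
by rewrite /= !inE !negb_or eq_sym r1_r0 l_l0 !disjoint //= ?r1_true ?l_false.
Qed.

Lemma card_crown_recolourable : 5 <= #|free|.
Proof.
case: (boolP [exists u, exists w, (u.1.1 != w.1.1) && (c u == c w)]).
  case/existsP => u /existsP [w /andP [uw /eqP cuw]].
  apply: leq_trans (subset_leq_card (_ : column u.1.2 \subset free)).
    by rewrite card_column.
  apply/subsetP => _ /imsetP [[s a] _ ->]; rewrite inE.
  exact: recolourable_column uw cuw _.
move=> no_shared_colour.
have [s [z mono]] : exists s z, forall v, v.1.1 = s -> c v = z.
  apply: monochromatic_side => u w uw; apply/eqP => cuw.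
  move/negP: no_shared_colour; apply.
  by apply/existsP; exists u; apply/existsP; exists w; rewrite uw cuw eqxx.
apply: leq_trans (subset_leq_card (recolourable_opposite_side mono)).
by rewrite card_side.
Qed.

End CrownThreeColourings.

Lemma sn_crown3 : 5 <= sn crown 3.
Proof.
apply: (sn_ge_recolourable crown_sym); first by rewrite !card_prod card_bool !card_ord.
exact: card_crown_recolourable.
Qed.

Theorem theorem6 :
  exists (T : finType) (e : rel T) (k : nat),
    [/\ simple_graph e, connected_graph e, bipartite e,
        0 < k /\ chi e <= k - 1 &
        sn e k < sn e (k - 1)].
Proof.
exists vertex, crown, 4; split.
- exact: crown_simple.
- exact: crown_connected.
- exact: crown_bipartite.
- by split => //; apply: leq_trans chi_crown _.
- exact: leq_ltn_trans sn_crown4 sn_crown3.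
Qed.
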